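(* Let $r,s\in\mathbb{F}_2((x^{-1}))$ with $\deg(r)\ge0$ and $\deg(s)\ge0$. If $r\preccurlyeq_x s$, then $S(r)\preccurlyeq_x S(s)$. In particular, $\tau(r)\le\tau(s)$.
   Context: $\mathbb{F}_2((x^{-1}))$ is the field of formal series $\sum_{z\in\mathbb{Z}}a_zx^z$, $a_z\in\mathbb{F}_2$, with $a_z\ne0$ for only finitely many positive $z$; $\deg$ is the largest exponent with nonzero coefficient. The polynomial part is $[\sum a_zx^z]=\sum_{z\ge0}a_zx^z$. $S(r)=\frac{r}{x+1}$ if $[r](1)=0$ and $S(r)=\frac{xr}{x+1}$ if $[r](1)=1$. For $\deg(r)\ge0$, $\tau(r)$ is the least $k\in\mathbb{N}$ with $[S^k(r)]=1$. We write $r\preccurlyeq_x s$ if there exists an integer $n\ge0$ with $x^nr=s$. *)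

(* F_2 is modelled by bool with addition = xor (addb). *)
From mathcomp Require Import all_boot all_order all_algebra.
From mathcomp Require Import zify.
Set Implicit Arguments. Unset Strict Implicit. Unset Printing Implicit Defensive.
Import Order.TTheory GRing.Theory Num.Theory.
Local Open Scope ring_scope.

(* An element of F_2((x^-1)): coefficient function z |-> a_z, together with an
   upper bound on the exponents carrying a nonzero coefficient. *)
Record lseries := LSeries {
  coef : int -> bool;
  bnd : int;
  coefP : forall z : int, bnd < z -> coef z = false }.

Definition lseq (r s : lseries) : Prop := forall z : int, coef r z = coef s z.

Lemma mulX_subproof (r : lseries) :
  forall z : int, bnd r + 1 < z -> coef r (z - 1) = false.
Proof. by move=> z hz; apply: coefP; lia. Qed.
Definition mulX (r : lseries) : lseries :=
  LSeries (@mulX_subproof r).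

Definition mulXn (n : nat) (r : lseries) : lseries := iter n mulX r.

Lemma mulX1_subproof (r : lseries) :
  forall z : int, bnd r + 1 < z -> coef r (z - 1) (+) coef r z = false.
Proof.
move=> z hz; rewrite !coefP //; lia.
Qed.
Definition mulX1 (r : lseries) : lseries := LSeries (@mulX1_subproof r).

(* division by x+1: since 1/(x+1) = x^-1 + x^-2 + ..., the coefficient of x^z
   in r/(x+1) is the sum over j > z of a_j (a finite sum, j <= bnd r). *)
Lemma divX1_subproof (r : lseries) :
  forall z : int, bnd r < z ->
    \big[addb/false]_(k < `|bnd r - z|%N) coef r (z + (k.+1)%:Z) = false.
Proof.
move=> z hz; apply: big1 => k _; apply: coefP.
lia.
Qed.
Definition divX1 (r : lseries) : lseries := LSeries (@divX1_subproof r).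

Lemma divX1K (r : lseries) : lseq (mulX1 (divX1 r)) r.
Proof.
move=> z /=.
have H : forall w : int, bnd r <= w ->
   \big[addb/false]_(k < `|bnd r - w|%N) coef r (w + (k.+1)%:Z) = false.
  by move=> w hw; apply: big1 => k _; apply: coefP; lia.
case: (leP (bnd r) (z - 1)) => hz.
  by rewrite !H // ?coefP //; lia.
have -> : absz (bnd r - (z - 1))%R = (absz (bnd r - z)%R).+1 by lia.
rewrite big_ord_recl /=.
have -> : z - 1 + Posz 1 = z by lia.
under eq_bigr => i _ do have -> : z - 1 + Posz (bump 0 i).+1 = z + Posz i.+1 by rewrite /bump /=; lia.
by rewrite -addbA addbb addbF.
Qed.

(* [r](1): the polynomial part of r evaluated at 1 (sum of a_z, 0 <= z) *)
Definition pp_at1 (r : lseries) : bool :=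
  \big[addb/false]_(k < (`|bnd r|%N).+1) coef r (k%:Z).

(* [r] = 1 : a_0 = 1 and a_z = 0 for all 0 < z (z <= bnd r suffices) *)
Definition pp_is_one (r : lseries) : bool :=
  coef r 0 && all (fun k : nat => ~~ coef r ((k.+1)%:Z)) (iota 0 `|bnd r|%N).

Definition S (r : lseries) : lseries :=
  if pp_at1 r then divX1 (mulX r) else divX1 r.

Definition deg_ge0 (r : lseries) : Prop := exists z : int, 0 <= z /\ coef r z.

Definition precx (r s : lseries) : Prop := exists n : nat, lseq (mulXn n r) s.

(* tau(r): least k with [S^k(r)] = 1 (0 by convention if no such k exists) *)
From Stdlib Require Import ClassicalEpsilon.
Definition tau (r : lseries) : nat :=
  match excluded_middle_informative (exists k, pp_is_one (iter k S r)) with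
  | left h => ex_minn h
  | right _ => 0%N
  end.

From mathcomp Require Import all_boot all_order all_algebra zify.
From Stdlib Require Import ClassicalEpsilon.
Set Implicit Arguments. Unset Strict Implicit. Unset Printing Implicit Defensive.
Import Order.TTheory GRing.Theory.
Local Open Scope ring_scope.

(* S u = x^[u](1) u/(x+1), and [u](1) is the coefficient of x^-1 in u/(x+1).
   Hence if s = x^n r, then S s = x^(n + [s](1) - [r](1)) S r, and by
   iteration S^k s = x^m S^k r for every k.
   As tau is 0 for a series that never reaches polynomial part 1, we also need
   that every series of nonnegative degree does reach it.  S never raises the
   degree, keeps it nonnegative as long as the polynomial part is not 1, and
   lowers it when [u](1) = 0; and if [u](1) = 1 during deg u + 1 consecutive
   steps, the relation (x+1) S u = x u of those steps forces polynomial part 1.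
   Finally, if S^k s = x^m S^k r has polynomial part 1 while S^k r still has
   nonnegative degree, then m = 0; applied to k = tau s this gives
   tau r <= tau s. *)

Definition deg_le (N : int) (u : lseries) : Prop :=
  forall z : int, N < z -> coef u z = false.

Definition terminates (t : lseries) : Prop := exists k, pp_is_one (iter k S t).

Lemma deg_leW (N M : int) (u : lseries) : deg_le N u -> N <= M -> deg_le M u.
Proof. by move=> hN le_NM z hz; apply: hN; lia. Qed.

Lemma deg_ge0_max (u : lseries) :
  deg_ge0 u -> exists d : nat, coef u d%:Z /\ deg_le d%:Z u.
Proof.
case=> z [z_ge0 uz].
have ex_d : exists d : nat, coef u d%:Z by exists `|z|%N; rewrite gez0_abs.
have le_d d : coef u d%:Z -> (d <= `|bnd u|)%N.
  by move=> ud; rewrite leqNgt; apply: contraL ud => lt_bd; rewrite coefP //; lia.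
case: (ex_maxnP ex_d le_d) => d ud maxd; exists d; split=> // j lt_dj.
apply/negbTE/negP => uj; have := maxd `|j|%N; rewrite gez0_abs; last lia.
by move/(_ uj); lia.
Qed.

Lemma coef_mulXn (n : nat) (r : lseries) (z : int) :
  coef (mulXn n r) z = coef r (z - n%:Z).
Proof.
elim: n z => [|n IH] z; first by rewrite subr0.
by rewrite /mulXn iterS -/(mulXn n r) /= IH; congr (coef r _); lia.
Qed.

Lemma precxP (r s : lseries) :
  precx r s <-> exists n : nat, forall z, coef s z = coef r (z - n%:Z).
Proof.
split=> -[n hn]; exists n => z; first by rewrite -hn coef_mulXn.
by rewrite coef_mulXn hn.
Qed.

Lemma coef_divX1_sum (r : lseries) (z : int) (M : nat) : bnd r - z <= M%:Z ->
  coef (divX1 r) z = \big[addb/false]_(k < M) coef r (z + k.+1%:Z).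
Proof.
move=> hM; case: (leP (bnd r) z) => [r_le_z | z_lt_r].
  by rewrite /= !big1 // => k _; apply: coefP; lia.
have le_M : (`|bnd r - z| <= M)%N by lia.
rewrite /= (big_ord_widen _ (fun k : nat => coef r (z + k.+1%:Z)) le_M) big_mkcond /=.
by apply: eq_bigr => k _; case: ifP => // k_big; rewrite coefP //; lia.
Qed.

Lemma coef_divX1S (r : lseries) (z : int) :
  coef (divX1 r) z = coef r (z + 1) (+) coef (divX1 r) (z + 1).
Proof.
rewrite (@coef_divX1_sum r z `|bnd r - z|.+1)
  ?(@coef_divX1_sum r (z + 1) `|bnd r - z|); try lia.
rewrite big_ord_recl; congr (_ (+) _).
by apply: eq_bigr => k _; congr (coef r _); rewrite /= -[bump 0 k]/(k.+1); lia.
Qed.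

Lemma coef_divX1_eq0 (r : lseries) (z : int) : deg_le z r -> coef (divX1 r) z = false.
Proof. by move=> hz /=; apply: big1 => k _; apply: hz; lia. Qed.

Lemma coef_divX1_top (r : lseries) (d : int) :
  deg_le d r -> coef (divX1 r) (d - 1) = coef r d.
Proof. by move=> hd; rewrite coef_divX1S subrK coef_divX1_eq0 // addbF. Qed.

Lemma deg_le_divX1 (N : int) (r : lseries) : deg_le N r -> deg_le (N - 1) (divX1 r).
Proof. by move=> hN z hz; apply: coef_divX1_eq0; apply: (deg_leW hN); lia. Qed.

Lemma coef_divX1_shift (n : nat) (u v : lseries) :
  (forall z, coef v z = coef u (z - n%:Z)) ->
  forall z, coef (divX1 v) z = coef (divX1 u) (z - n%:Z).
Proof.
move=> hvu z; set M := (`|bnd u| + `|bnd v| + `|z| + n)%N.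
rewrite (@coef_divX1_sum v z M) ?(@coef_divX1_sum u (z - n%:Z) M); try lia.
by apply: eq_bigr => k _; rewrite hvu; congr (coef u _); lia.
Qed.

Lemma pp_at1E (r : lseries) : pp_at1 r = coef (divX1 r) (-1).
Proof.
rewrite (@coef_divX1_sum r (-1) `|bnd r|.+1); last lia.
by apply: eq_bigr => k _; congr (coef r _); lia.
Qed.

Lemma pp_is_oneP (u : lseries) : reflect (coef u 0 /\ deg_le 0 u) (pp_is_one u).
Proof.
apply: (iffP andP) => -[u0 hu]; split=> //.
  move/allP: hu => hu z z_gt0; case: (leP z (bnd u)) => z_bnd; last exact: coefP.
  have := hu `|z - 1|%N; rewrite mem_iota add0n.
  have -> : `|z - 1|.+1%:Z = z by lia.
  by move=> h; apply/negbTE/h; lia.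
by apply/allP => k _; rewrite hu //; lia.
Qed.

Lemma coef_S (u : lseries) (z : int) :
  coef (S u) z = coef (divX1 u) (z - (pp_at1 u)%:Z).
Proof.
rewrite /S; case: (pp_at1 u); last by rewrite subr0.
exact: (@coef_divX1_shift 1).
Qed.

Lemma precx_S (u v : lseries) : precx u v -> precx (S u) (S v).
Proof.
case/precxP=> n hvu; apply/precxP.
have hdiv := coef_divX1_shift hvu.
have b_vu : pp_at1 v = coef (divX1 u) (-1 - n%:Z) by rewrite pp_at1E hdiv.
have n0_b : n = 0%N -> pp_at1 v = pp_at1 u by move=> n0; rewrite b_vu pp_at1E n0 subr0.
(* the exponent n + [v](1) - [u](1) is nonnegative, as n = 0 forces v = u *)
exists (n + pp_at1 v - pp_at1 u)%N => z; rewrite !coef_S hdiv; congr (coef _ _).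
by case: n {hvu hdiv b_vu} n0_b => [|n] h; [rewrite h //; lia | lia].
Qed.

Lemma precx_iterS (k : nat) (u v : lseries) :
  precx u v -> precx (iter k S u) (iter k S v).
Proof. by move=> huv; elim: k => [|k IH] //=; exact: precx_S. Qed.

Lemma pp_is_one_precx (u v : lseries) :
  precx u v -> deg_ge0 u -> pp_is_one v -> pp_is_one u.
Proof.
case/precxP=> n hvu [w [w_ge0 uw]] /pp_is_oneP[v0 hv].
have n0 : n = 0%N.
  case: (ltP 0 (w + n%:Z)) => [wn_gt0 | ]; last lia.
  by move: uw; rewrite -(addrK n%:Z w) -hvu hv.
have {}hvu z : coef v z = coef u z by rewrite hvu n0 subr0.
by apply/pp_is_oneP; split=> [|z hz]; rewrite -hvu //; apply: hv.
Qed.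

Lemma deg_le_S (N : int) (u : lseries) :
  deg_le N u -> deg_le (N - 1 + (pp_at1 u)%:Z) (S u).
Proof. by move=> hN z hz; rewrite coef_S; apply: (deg_le_divX1 hN); lia. Qed.

Lemma deg_le_iterS (N : int) (k : nat) (u : lseries) :
  deg_le N u -> deg_le N (iter k S u).
Proof.
move=> hN; elim: k => [|k IH] //=.
by apply: (deg_leW (deg_le_S IH)); case: (pp_at1 _); lia.
Qed.

Lemma deg_ge0_S (u : lseries) : deg_ge0 u -> ~~ pp_is_one u -> deg_ge0 (S u).
Proof.
case/deg_ge0_max=> d [ud hd] not_one.
case: d ud hd => [|d] ud hd; first by case/negP: not_one; apply/pp_is_oneP.
exists (d%:Z + (pp_at1 u)%:Z); split; first lia.
by rewrite coef_S addrK (_ : d%:Z = d.+1%:Z - 1) ?coef_divX1_top //; lia.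
Qed.

Lemma deg_ge0_iterS (k : nat) (t : lseries) : deg_ge0 t ->
  (forall i, (i < k)%N -> ~~ pp_is_one (iter i S t)) -> deg_ge0 (iter k S t).
Proof.
move=> ht; elim: k => [|k IH] not_one //; rewrite iterS.
by apply: deg_ge0_S; [apply: IH => i lt_ik; apply: not_one; lia | exact: not_one].
Qed.

Lemma coef_S0 (u : lseries) : pp_at1 u -> coef (S u) 0.
Proof. by move=> b1; rewrite coef_S b1 sub0r -pp_at1E. Qed.

Lemma coef_S_rec (u : lseries) (z : int) :
  pp_at1 u -> coef (S u) (z + 1) = coef (S u) z (+) coef u z.
Proof.
move=> b1; rewrite !coef_S b1 addrK (coef_divX1S _ (z - 1)) subrK.
by case: (coef u z); case: (coef (divX1 u) z).
Qed.

Lemma coef_iter_pp_at1_run (k z : nat) (t : lseries) :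
  (forall i, (i < k)%N -> pp_at1 (iter i S t)) -> (z.+1 < k)%N ->
  coef (iter k S t) z.+1%:Z = false.
Proof.
elim: z k => [|z IH] [|k] // run lt_zk; rewrite iterS.
  rewrite (_ : 1%N%:Z = 0 + 1) // coef_S_rec ?run //.
  by case: k run lt_zk => [|k] // run _; rewrite !coef_S0 //; apply: run.
rewrite (_ : z.+2%:Z = z.+1%:Z + 1); last lia.
have run' i : (i < k)%N -> pp_at1 (iter i S t) by move=> lt_ik; apply: run; lia.
by rewrite coef_S_rec ?run // -iterS !IH // ltnW.
Qed.

Lemma pp_at1_run_pp_is_one (n : nat) (t : lseries) : deg_le n%:Z t ->
  (forall k, (k <= n)%N -> pp_at1 (iter k S t)) -> pp_is_one (iter n.+1 S t).
Proof.
move=> hn run; apply/pp_is_oneP; split; first by rewrite iterS coef_S0 ?run.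
move=> z z_gt0; case: (ltP n%:Z z) => [lt_nz | le_zn].
  exact: (deg_le_iterS n.+1 hn lt_nz).
rewrite (_ : z = `|z|.-1.+1%:Z); last lia.
by apply: coef_iter_pp_at1_run; [move=> i lt_in; apply: run | ]; lia.
Qed.

Lemma deg_le_descent (n : nat) (t : lseries) :
  deg_ge0 t -> deg_le n%:Z t -> ~ terminates t ->
  exists u, [/\ deg_ge0 u, deg_le (n%:Z - 1) u & ~ terminates u].
Proof.
move=> ht hn nt.
have not_one i : ~~ pp_is_one (iter i S t) by apply/negP => one; apply: nt; exists i.
have [k [le_kn b0]] : exists k, (k <= n)%N /\ ~~ pp_at1 (iter k S t).
  apply: NNPP => no_k; apply: nt; exists n.+1; apply: pp_at1_run_pp_is_one => // k le_kn.
  by apply/negPn/negP => b0; apply: no_k; exists k.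
exists (iter k.+1 S t); split.
- exact: deg_ge0_iterS.
- by apply: (deg_leW (deg_le_S (deg_le_iterS k hn))); rewrite (negbTE b0); lia.
- by case=> j one; apply: nt; exists (j + k.+1)%N; rewrite iterD.
Qed.

Lemma deg_ge0_terminates (t : lseries) : deg_ge0 t -> terminates t.
Proof.
move=> ht; have [n hn] : exists n : nat, deg_le n%:Z t.
  by exists `|bnd t|%N => z hz; apply: coefP; lia.
elim: n t ht hn => [|n IH] t ht hn; apply: NNPP => nt;
  have [u [hu0 hun nu]] := deg_le_descent ht hn nt.
  by case: hu0 => w [w_ge0 uw]; rewrite hun in uw; lia.
by apply: nu; apply: IH hu0 _; apply: (deg_leW hun); lia.
Qed.

Lemma tau_le (k : nat) (t : lseries) : pp_is_one (iter k S t) -> (tau t <= k)%N.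
Proof.
move=> one; rewrite /tau.
case: excluded_middle_informative => [ex | []]; last by exists k.
by case: ex_minnP => m _; apply.
Qed.

Lemma tau_pp_is_one (t : lseries) : terminates t -> pp_is_one (iter (tau t) S t).
Proof.
by move=> ex; rewrite /tau; case: excluded_middle_informative => // ?; case: ex_minnP.
Qed.

Lemma deg_ge0_iter_tau (k : nat) (t : lseries) :
  deg_ge0 t -> (k <= tau t)%N -> deg_ge0 (iter k S t).
Proof.
by move=> ht le_k; apply: deg_ge0_iterS => // i lt_ik; apply/negP => /tau_le; lia.
Qed.

Theorem lemma2p4 (r s : lseries) :
  deg_ge0 r -> deg_ge0 s -> precx r s ->
  precx (S r) (S s) /\ (tau r <= tau s)%N.
Proof.
move=> hr hs rs; split; first exact: precx_S.
rewrite leqNgt; apply/negP => lt_sr.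
have one_r : pp_is_one (iter (tau s) S r).
  apply: (pp_is_one_precx (precx_iterS _ rs)); first exact: deg_ge0_iter_tau (ltnW lt_sr).
  exact/tau_pp_is_one/deg_ge0_terminates.
by have := tau_le one_r; rewrite leqNgt lt_sr.
Qed.
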